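(* Let $\varphi^{(0)}=a^{(0)}_kq^k+\sum_{j\ge k+1}a^{(0)}_jq^j$ and $\psi=b_0+b_1q+\sum_{j\ge2}b_jq^j$ be formal power series with integer coefficients, where $a^{(0)}_k\ge1$, $b_0,b_1\ge1$ and $b_j\ge0$ for all $j\ge2$. For $n\ge0$ let $\varphi^{(n)}=\varphi^{(0)}\psi^n=\sum_{j\ge k}a^{(n)}_jq^j$ and $$M_n=\max\{m\in\mathbb N: a^{(n)}_j>0\text{ for all }k\le j\le m\}.$$ Then the sequence $(M_n)_{n\ge0}$ is nondecreasing and unbounded. *)

From mathcomp Require Import all_boot all_order all_algebra.
Set Implicit Arguments. Unset Strict Implicit. Unset Printing Implicit Defensive.
Import Order.TTheory GRing.Theory Num.Theory.
Local Open Scope ring_scope.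

Definition fps := nat -> int.

Definition fps_mul (f g : fps) : fps :=
  fun j => \sum_(i < j.+1) f i * g (j - i)%N.

Definition fps_one : fps := fun j => if j == 0%N then 1 else 0.

Fixpoint fps_pow (f : fps) (n : nat) : fps :=
  match n with
  | 0 => fps_one
  | n'.+1 => fps_mul (fps_pow f n') f
  end.

Definition phin (phi0 psi : fps) (n : nat) : fps := fps_mul phi0 (fps_pow psi n).

(* "M_n >= m": all coefficients a^(n)_j with k <= j <= m are positive.
   M_n = sup { m | M_ge phi0 psi k n m } (possibly +infinity). *)
Definition M_ge (phi0 psi : fps) (k n m : nat) : Prop :=
  forall j : nat, (k <= j)%N -> (j <= m)%N -> 0 < phin phi0 psi n j.

From mathcomp Require Import all_boot all_order all_algebra.
From mathcomp Require Import lra ring.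
Set Implicit Arguments. Unset Strict Implicit. Unset Printing Implicit Defensive.
Import Order.TTheory GRing.Theory Num.Theory.
Local Open Scope ring_scope.

(* If [a^(n)] is positive on [k..N] then [a^(n+1)_j >= b_0 a^(n)_j] keeps it
   so, and [a^(n+1)_(N+1) >= b_0 a^(n)_(N+1) + b_1 a^(n)_N].  Along the
   iterates, [a_N] grows at least like [b_0^t] while [a_(N+1) / b_0^t]
   increases by a fixed positive amount at each step, so [a_(N+1)] becomes
   positive: the positivity window grows by one, hence is unbounded. *)

(* Associativity of the Cauchy product is inherited from [{poly int}]: the
   coefficients below [N] only depend on the truncations at order [N]. *)
Definition fps_trunc (N : nat) (f : fps) : {poly int} := \poly_(i < N) f i.

Lemma fps_mul_trunc N f g j :
  (j < N)%N -> fps_mul f g j = (fps_trunc N f * fps_trunc N g)`_j.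
Proof.
move=> ltjN; rewrite coefM /fps_mul; apply: eq_bigr => i _.
rewrite /fps_trunc !coef_poly.
have -> : (i < N)%N by apply: leq_ltn_trans ltjN; rewrite -ltnS.
by have -> : (j - i < N)%N by apply: leq_ltn_trans ltjN; apply: leq_subr.
Qed.

Lemma coefMr_eq N (p q r : {poly int}) j :
  (forall i, (i < N)%N -> q`_i = r`_i) -> (j < N)%N -> (p * q)`_j = (p * r)`_j.
Proof.
move=> eq_qr ltjN; rewrite !coefM; apply: eq_bigr => i _; rewrite eq_qr //.
by apply: leq_ltn_trans ltjN; apply: leq_subr.
Qed.

Lemma fps_mulA f g h j :
  fps_mul f (fps_mul g h) j = fps_mul (fps_mul f g) h j.
Proof.
have ltjj : (j < j.+1)%N by [].
have trunc_mul u v i : (i < j.+1)%N ->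
    (fps_trunc j.+1 (fps_mul u v))`_i = (fps_trunc j.+1 u * fps_trunc j.+1 v)`_i.
  by move=> lti; rewrite coef_poly lti (fps_mul_trunc u v lti).
rewrite !(fps_mul_trunc _ _ ltjj).
rewrite (coefMr_eq _ (trunc_mul g h)) // [in RHS]mulrC.
by rewrite (coefMr_eq _ (trunc_mul f g)) // mulrA mulrC.
Qed.

Lemma phin0 phi0 psi j : phin phi0 psi 0 j = phi0 j.
Proof.
rewrite /phin /fps_mul big_ord_recr /= subnn mulr1 big1 ?add0r // => i _.
by rewrite /fps_one subn_eq0 leqNgt ltn_ord mulr0.
Qed.

Lemma phinS phi0 psi n j :
  phin phi0 psi n.+1 j = fps_mul (phin phi0 psi n) psi j.
Proof. by rewrite /phin /= fps_mulA. Qed.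

Lemma phin_below phi0 psi k n j :
  (forall i, (i < k)%N -> phi0 i = 0) -> (j < k)%N -> phin phi0 psi n j = 0.
Proof.
move=> phi0_low ltjk; rewrite /phin /fps_mul big1 // => i _.
by rewrite phi0_low ?mul0r // (leq_ltn_trans _ ltjk) // -ltnS.
Qed.

Section NonnegCauchy.

Variables (a psi : fps).
Hypothesis psi_ge0 : forall i, 0 <= psi i.

Lemma fps_mul_ge_lead j : (forall i, (i < j)%N -> 0 <= a i) ->
  psi 0%N * a j <= fps_mul a psi j.
Proof.
move=> a_ge0; rewrite /fps_mul big_ord_recr /= subnn mulrC lerDr.
by apply: sumr_ge0 => i _; rewrite mulr_ge0 ?a_ge0.
Qed.

Lemma fps_mul_ge_lead2 m : (forall i, (i <= m)%N -> 0 <= a i) ->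
  psi 0%N * a m.+1 + psi 1%N * a m <= fps_mul a psi m.+1.
Proof.
move=> a_ge0; rewrite /fps_mul !big_ord_recr /= subnn subSn // subnn.
rewrite [psi 0%N * _]mulrC [psi 1%N * _]mulrC [leLHS]addrC -addrA lerDr.
by apply: sumr_ge0 => i _; rewrite mulr_ge0 ?a_ge0 // ltnW.
Qed.

End NonnegCauchy.

Lemma scaled_linear_growth (R : realDomainType) (b0 b1 : R) (x y : nat -> R) :
  0 <= b0 -> 0 <= b1 ->
  (forall t, b0 * y t <= y t.+1) ->
  (forall t, b0 * x t + b1 * y t <= x t.+1) ->
  forall t, b0 ^+ t * (b0 * x 0%N + t%:R * b1 * y 0%N) <= b0 * x t.
Proof.
move=> b0_ge0 b1_ge0 y_rec x_rec.
have y_geom t : b0 ^+ t * y 0%N <= y t.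
  elim: t => [|t IH]; first by rewrite mul1r.
  by rewrite exprS -mulrA (le_trans _ (y_rec t)) // ler_wpM2l.
elim=> [|t IH]; first by rewrite mul1r mul0r mul0r addr0.
have step : b0 * (b0 * x t + b1 * y t) <= b0 * x t.+1 by rewrite ler_wpM2l.
have bx := ler_wpM2l b0_ge0 IH.
have by0 := ler_wpM2l (mulr_ge0 b0_ge0 b1_ge0) (y_geom t).
apply: le_trans step; rewrite [leRHS]mulrDr [b0 * (b1 * _)]mulrA.
apply: le_trans (lerD bx by0) => {bx by0 IH}.
by rewrite exprS -natr1 le_eqVlt; apply/orP; left; apply/eqP; ring.
Qed.

Lemma linear_growth_eventually_gt0 (b0 b1 : int) (x y : nat -> int) :
  0 < b0 -> 0 <= b1 -> 0 < b1 * y 0%N ->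
  (forall t, b0 * y t <= y t.+1) ->
  (forall t, b0 * x t + b1 * y t <= x t.+1) ->
  exists t, 0 < x t.
Proof.
move=> b0_gt0 b1_ge0 b1y0_gt0 y_rec x_rec.
pose t := (absz (b0 * x 0%N)).+1; exists t.
have growth := scaled_linear_growth (ltW b0_gt0) b1_ge0 y_rec x_rec t.
have t_big : `|b0 * x 0%N| < t%:R by rewrite /t -natr1 natz abszE ltrDl.
have lin_gt0 : 0 < b0 * x 0%N + t%:R * b1 * y 0%N.
  have := ler_norm (- (b0 * x 0%N)); rewrite normrN -mulrA.
  have : t%:R <= t%:R * (b1 * y 0%N) by rewrite ler_peMr // ?ler0n.
  lra.
have := lt_le_trans (mulr_gt0 (exprn_gt0 t b0_gt0) lin_gt0) growth.
by rewrite pmulr_rgt0.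
Qed.

Section PositivityWindow.

Variables (k : nat) (phi0 psi : fps).
Hypothesis phi0_low : forall j : nat, (j < k)%N -> phi0 j = 0.
Hypothesis phi0k_ge1 : 1 <= phi0 k.
Hypothesis psi0_ge1 : 1 <= psi 0%N.
Hypothesis psi1_ge1 : 1 <= psi 1%N.
Hypothesis psi_ge0_from2 : forall j : nat, (2 <= j)%N -> 0 <= psi j.

Local Notation a := (phin phi0 psi).
Local Notation M_ge := (M_ge phi0 psi k).

Lemma psi_ge0 i : 0 <= psi i.
Proof.
case: i => [|[|i]]; last exact: psi_ge0_from2.
- exact: le_trans ler01 psi0_ge1.
- exact: le_trans ler01 psi1_ge1.
Qed.

Lemma M_ge_ge0 n m i : M_ge n m -> (i <= m)%N -> 0 <= a n i.
Proof.
move=> Mnm leim; case: (ltnP i k) => [ltik | leki].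
  by rewrite (phin_below _ _ phi0_low ltik).
exact/ltW/Mnm.
Qed.

Lemma M_ge0 m : (m <= k)%N -> M_ge 0 m.
Proof.
move=> lemk j lekj lejm.
have -> : j = k by apply/eqP; rewrite eqn_leq lekj (leq_trans lejm lemk).
by rewrite phin0 (lt_le_trans ltr01).
Qed.

Lemma M_geS n m : M_ge n m -> M_ge n.+1 m.
Proof.
move=> Mnm j lekj lejm; rewrite phinS.
have lead_le := fps_mul_ge_lead psi_ge0
  (fun i ltij => M_ge_ge0 Mnm (ltnW (leq_trans ltij lejm))).
by apply: lt_le_trans lead_le; rewrite mulr_gt0 ?Mnm // (lt_le_trans ltr01).
Qed.

Lemma M_geD n t m : M_ge n m -> M_ge (n + t) m.
Proof. by move=> Mnm; elim: t => [|t IH]; rewrite ?addn0 // addnS; apply: M_geS. Qed.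

Lemma M_ge_extend n N : (k <= N)%N -> M_ge n N -> exists n', M_ge n' N.+1.
Proof.
move=> lekN MnN.
pose x t := a (n + t)%N N.+1; pose y t := a (n + t)%N N.
have psi0_gt0 : 0 < psi 0%N by apply: lt_le_trans psi0_ge1.
have [t xt_gt0] : exists t, 0 < x t.
  apply: (linear_growth_eventually_gt0 (y := y) psi0_gt0 (psi_ge0 1)) => [|t|t].
  - by rewrite /y addn0 mulr_gt0 ?(MnN N lekN) // (lt_le_trans ltr01).
  - rewrite /y addnS phinS.
    apply: (fps_mul_ge_lead psi_ge0) => i lt_iN.
    exact: M_ge_ge0 (M_geD t MnN) (ltnW lt_iN).
  - rewrite /x /y addnS phinS.
    apply: (fps_mul_ge_lead2 psi_ge0) => i.
    exact: M_ge_ge0 (M_geD t MnN).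
exists (n + t)%N => j lekj; rewrite leq_eqVlt => /predU1P [-> //| ltjN].
exact: M_geD MnN _ lekj ltjN.
Qed.

End PositivityWindow.

Theorem lemma7p2 (k : nat) (phi0 psi : fps)
  (hlow : forall j : nat, (j < k)%N -> phi0 j = 0)
  (hak : 1 <= phi0 k)
  (hb0 : 1 <= psi 0%N) (hb1 : 1 <= psi 1%N)
  (hbj : forall j : nat, (2 <= j)%N -> 0 <= psi j) :
  (forall n m : nat, M_ge phi0 psi k n m -> M_ge phi0 psi k n.+1 m) /\
  (forall N : nat, exists n : nat, M_ge phi0 psi k n N).
Proof.
split=> [n m|]; first exact: M_geS.
elim=> [|N [n MnN]]; first by exists 0%N; apply: M_ge0.
have [ltNk | lekN] := ltnP N k; first by exists 0%N; apply: M_ge0.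
exact: M_ge_extend MnN.
Qed.
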